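(* Let $\mathcal O$ be a cyclic operad and $n\ge1$. Then $\psi_n\circ\phi_n = M_n$ as maps $\mathcal{OG}\to\mathcal{OG}$.
   Context: Work over $\mathbb R$. $\mathcal O$ is a cyclic operad; for $m\ge 2$, $\mathcal S[m]=(\bigoplus_L\mathcal O[m-1])_{\Sigma_m}$ is the space of $\mathcal O$-spiders with $m$ legs (sum over labelings $L$ of the legs of an $m$-star by $\{0,\dots,m-1\}$). An orientation of a graph (finite 1-dimensional CW complex) is an ordering of its vertices plus a direction on each edge, up to even numbers of vertex transpositions and edge reversals. An $\mathcal O$-graph is an oriented graph without univalent vertices whose vertices are colored by $\mathcal O$-spiders with legs identified with the incident half-edges; $\mathcal{OG}$ is spanned by $\mathcal O$-graphs modulo $(\mathbf X,or)=-(\mathbf X,-or)$ and linearity in each vertex coloring. Let $V_n=\mathbb R^{2n}$ with basis $B_n=\{p_1,\dots,p_n,q_1,\dots,q_n\}$ and standard symplectic form $\omega$ ($\omega(p_i,q_j)=\delta_{ij}=-\omega(q_j,p_i)$, others $0$). $\mathfrak a\mathcal O_n=\bigoplus_{m\ge2}(\mathcal S[m]\otimes V_n^{\otimes m})_{\Sigma_m}$, spanned by symplecto-spiders (spiders with a vector of $V_n$ on each leg). $\phi_n:\mathcal{OG}\to\wedge\mathfrak a\mathcal O_n$: fix a representative of the orientation of $\mathbf X$ (vertex order, edge directions). A state $s$ assigns an element of $B_n$ to each half-edge so that the two half-edges of each edge receive $p_i$ and $q_i$ for some $i$; the sign of an edge is $+1$ if its initial half-edge gets $p_i$ and $-1$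 if it gets $q_i$, and $\sigma(s)$ is the product of the edge signs. Cutting every edge at its midpoint gives symplecto-spiders $\mathbf s_1,\dots,\mathbf s_k$ indexed by the vertex order; $\mathbf X\{s\}=\mathbf s_1\wedge\cdots\wedge\mathbf s_k$ and $\phi_n(\mathbf X)=\sum_s\sigma(s)\mathbf X\{s\}$. $\psi_n:\wedge\mathfrak a\mathcal O_n\to\mathcal{OG}$: for a pairing $\pi$ of all legs of $\mathbf s_1,\dots,\mathbf s_k$, glue legs according to $\pi$ to get an $\mathcal O$-graph $(\mathbf s_1\wedge\cdots\wedge\mathbf s_k)^\pi$ with vertex $j$ colored by the spider of $\mathbf s_j$, vertices ordered $1,\dots,k$, and edges directed arbitrarily; the weight of an edge is $\omega(v_1,v_2)$ where $v_1,v_2$ are the vectors on its initial and terminal half-edges, and $w(\pi)$ is the product of the weights (the product $w(\pi)(\cdots)^\pi$ is independent of the edge directions). $\psi_n(\mathbf s_1\wedge\cdots\wedge\mathbf s_k)=\sum_\pi w(\pi)(\mathbf s_1\wedge\cdots\wedge\mathbf s_k)^\pi$. $M_n:\mathcal{OG}\to\mathcal{OG}$: for a pairing $\pi$ of the half-edges $H(X)$, $X^\pi$ is obtained by cutting all edges and regluing according to $\pi$. The union of the chord diagrams of $\pi$ and of the standard pairing $\{x,\bar x\}$ is a union $C(\pi)$ of circles with $c(\pi)$ components; choosing a representative orientation of $X$ whose edge directions are coherent around each circle, edges of $X^\pi$ get the induced directions and vertices keep their order, giving the $\mathcal O$-graph $\mathbf X^\pi$. $M_n(\mathbf X)=\sum_\pi(2n)^{c(\pi)}\mathbf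 X^\pi$. *)

From HB Require Import structures.
From mathcomp Require Import all_boot all_order all_algebra all_fingroup.
From mathcomp Require Import reals.
Set Implicit Arguments.
Unset Strict Implicit.
Unset Printing Implicit Defensive.
Import Order.TTheory GRing.Theory Num.Theory.
Local Open Scope ring_scope.

(* Cyclic Sigma-module underlying a cyclic operad O:                   *)
(*   Oc m = O((m)) = O[m-1], the space of operations with m "legs",    *)
Record cycSmod (R : pzRingType) := CycSmod {
  Oc : nat -> lmodType R;
  act : forall m, 'S_m -> Oc m -> Oc m;
  act_linear : forall m (s : 'S_m) (a : R) (x y : Oc m),
      act s (a *: x + y) = a *: act s x + act s y;
  act1 : forall m (x : Oc m), act 1 x = x;
  (* left action: (s o t) . x = s . (t . x); in mathcomp (t * s) = s o t *)
  actM : forall m (s t : 'S_m) (x : Oc m), act (s * t) x = act t (act s x)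
}.

Section Graphs.
Variable R : realType.
Variable O : cycSmod R.

(* action of a permutation of 'I_m on nat (identity outside [0,m)) *)
Definition pn m (s : 'S_m) (i : nat) : nat :=
  match (insub i : option 'I_m) with Some j => val (s j) | None => i end.

Definition natf N (p : {ffun 'I_N -> 'I_N}) (h : nat) : nat :=
  match (insub h : option 'I_N) with Some j => val (p j) | None => h end.

Definition is_pairing N (p : {ffun 'I_N -> 'I_N}) : bool :=
  [forall h, (p h != h) && (p (p h) == h)].

(* An oriented O-graph (with a chosen representative of its orientation):
   vertices 0..gk-1 (vertex order = natural order), half-edges 0..gh-1,
   gatt h = vertex of half-edge h, gmate = the other half of its edge,
   ginit h = h is the initial half-edge of its (directed) edge,
   glab h = label of the leg of the spider at gatt h identified with h,
   gcol v = the O-operation (with deg v legs) colouring vertex v.          *)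
Record gdat := GD {
  gk : nat;
  gh : nat;
  gatt : nat -> nat;
  gmate : nat -> nat;
  ginit : nat -> bool;
  glab : nat -> nat;
  gcol : nat -> {m : nat & Oc O m}
}.

Definition deg (X : gdat) (v : nat) : nat :=
  #|[pred h : 'I_(gh X) | gatt X h == v]|.

Definition wf (X : gdat) : Prop :=
  [/\ (forall h, (h < gh X)%N ->
         [/\ (gatt X h < gk X)%N, (gmate X h < gh X)%N, gmate X h != h,
             gmate X (gmate X h) = h & ginit X (gmate X h) = ~~ ginit X h]),
      (forall h, (h < gh X)%N -> (glab X h < deg X (gatt X h))%N),
      (forall h h', (h < gh X)%N -> (h' < gh X)%N ->
         gatt X h = gatt X h' -> glab X h = glab X h' -> h = h') &
      (forall v, (v < gk X)%N -> (2 <= deg X v)%N /\ projT1 (gcol X v) = deg X v)].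

Definition transported (X Y : gdat) (s : 'S_(gk X)) (t : 'S_(gh X)) : Prop :=
  [/\ gk Y = gk X, gh Y = gh X,
      (forall h, (h < gh X)%N ->
         [/\ gatt Y (pn t h) = pn s (gatt X h),
             gmate Y (pn t h) = pn t (gmate X h),
             ginit Y (pn t h) = ginit X h &
             glab Y (pn t h) = glab X h]) &
      (forall v, (v < gk X)%N -> gcol Y (pn s v) = gcol X v)].

Definition flipedge (X : gdat) (h0 : nat) : gdat :=
  GD (gk X) (gh X) (gatt X) (gmate X)
     (fun h => if (h == h0) || (h == gmate X h0) then ~~ ginit X h else ginit X h)
     (glab X) (gcol X).

Definition setcol (X : gdat) (v : nat) (c : {m : nat & Oc O m}) : gdat :=
  GD (gk X) (gh X) (gatt X) (gmate X) (ginit X) (glab X)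
     (fun u => if u == v then c else gcol X u).

Definition relab (X : gdat) (v : nat) (s : 'S_(deg X v)) (o : Oc O (deg X v)) : gdat :=
  GD (gk X) (gh X) (gatt X) (gmate X) (ginit X)
     (fun h => if gatt X h == v then pn s (glab X h) else glab X h)
     (fun u => if u == v then existT _ (deg X v) o else gcol X u).

(* F : gdat -> W induces a (linear) map on OG, i.e. its linear extension
   kills all defining relations of OG:
   isomorphism / vertex-order sign, edge-reversal sign, multilinearity in
   vertex colourings, and the Sigma_m-coinvariance of spider colourings. *)
Record respects (W : lmodType R) (F : gdat -> W) : Prop := Respects {
  resp_iso : forall X Y s t, wf X -> wf Y -> @transported X Y s t ->
      F Y = (-1) ^+ odd_perm s *: F X;
  resp_flip : forall X h0, wf X -> (h0 < gh X)%N -> F (flipedge X h0) = - F X;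
  resp_lin : forall X v m (o1 o2 : Oc O m) (a b : R), (v < gk X)%N ->
      wf (setcol X v (existT _ m o1)) ->
      F (setcol X v (existT _ m (a *: o1 + b *: o2))) =
        a *: F (setcol X v (existT _ m o1)) + b *: F (setcol X v (existT _ m o2));
  resp_coinv : forall X v (s : 'S_(deg X v)) (o : Oc O (deg X v)), wf X ->
      (v < gk X)%N -> gcol X v = existT _ (deg X v) o ->
      F (@relab X v s (act s o)) = F X
}.

Variable n : nat.
Definition Vn := 'rV[R]_(n + n).
(* p_i = e_(lshift n i), q_i = e_(rshift n i) *)
Definition omega (u v : Vn) : R :=
  \sum_(i < n) (u 0 (lshift n i) * v 0 (rshift n i) - u 0 (rshift n i) * v 0 (lshift n i)).
(* basis element: (i, false) = p_i, (i, true) = q_i *)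
Definition bvec (b : 'I_n * bool) : Vn :=
  delta_mx 0 (if b.2 then rshift n b.1 else lshift n b.1).

(* symplecto-spider: an O-operation with sm legs, vector sv l on leg l *)
Record sspider := SS { sm : nat; so : Oc O sm; sv : nat -> Vn }.
Definition dflt : sspider := SS (0 : Oc O 0) (fun _ => 0).

Fixpoint leg_of (w : seq sspider) (h : nat) : nat * nat :=
  match w with
  | [::] => (0%N, h)
  | s :: w' => if (h < sm s)%N then (0%N, h)
               else let jl := leg_of w' (h - sm s) in (jl.1.+1, jl.2)
  end.
Definition nlegs (w : seq sspider) : nat := sumn [seq sm s | s <- w].
Definition legvec (w : seq sspider) (h : nat) : Vn :=
  sv (nth dflt w (leg_of w h).1) (leg_of w h).2.

Definition glue (w : seq sspider) (p : {ffun 'I_(nlegs w) -> 'I_(nlegs w)}) : gdat :=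
  GD (size w) (nlegs w) (fun h => (leg_of w h).1) (natf p)
     (fun h => (h < natf p h)%N) (fun h => (leg_of w h).2)
     (fun j => existT _ (sm (nth dflt w j)) (so (nth dflt w j))).

Definition weight (w : seq sspider) (p : {ffun 'I_(nlegs w) -> 'I_(nlegs w)}) : R :=
  \prod_(h < nlegs w | (h < p h)%N) omega (legvec w h) (legvec w (p h)).

(* psi_n on a wedge word, followed by the map OG -> W induced by F *)
Definition psi_n (W : lmodType R) (F : gdat -> W) (w : seq sspider) : W :=
  \sum_(p : {ffun 'I_(nlegs w) -> 'I_(nlegs w)} | is_pairing p)
     weight p *: F (glue p).

Definition mateo (X : gdat) (h : 'I_(gh X)) : 'I_(gh X) := insubd h (gmate X h).

Definition is_state (X : gdat) (s : {ffun 'I_(gh X) -> 'I_n * bool}) : bool :=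
  [forall h, ((s (mateo h)).1 == (s h).1) && ((s (mateo h)).2 == ~~ (s h).2)].

Definition stsign (X : gdat) (s : {ffun 'I_(gh X) -> 'I_n * bool}) : R :=
  \prod_(h : 'I_(gh X) | ginit X h) (if (s h).2 then -1 else 1).

Definition cut (X : gdat) (s : {ffun 'I_(gh X) -> 'I_n * bool}) : seq sspider :=
  [seq SS (projT2 (gcol X v))
       (fun l => \sum_(h : 'I_(gh X) | (gatt X h == v) && (glab X h == l)) bvec (s h))
   | v <- iota 0 (gk X)].

Definition psi_phi (W : lmodType R) (F : gdat -> W) (X : gdat) : W :=
  \sum_(s : {ffun 'I_(gh X) -> 'I_n * bool} | is_state s) stsign s *: psi_n F (cut s).

Definition ncirc (X : gdat) (p : {ffun 'I_(gh X) -> 'I_(gh X)}) : nat :=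
  n_comp (fun h h' : 'I_(gh X) => (h' == mateo h) || (h' == p h)) 'I_(gh X).

(* d h = h is initial in a representative orientation of X whose edge
   directions are coherent around each circle of C(pi)                *)
Definition coherent (X : gdat) (p : {ffun 'I_(gh X) -> 'I_(gh X)})
  (d : {ffun 'I_(gh X) -> bool}) : bool :=
  [forall h, (d (mateo h) == ~~ d h) && (d (p h) == ~~ d h)].

(* sign relating that representative to the given one *)
Definition flipsign (X : gdat) (d : {ffun 'I_(gh X) -> bool}) : R :=
  (-1) ^+ #|[pred h : 'I_(gh X) | ginit X h && ~~ d h]|.

(* X^pi with induced orientation: new edges directed from the half-edge
   that is initial in the coherent representative                      *)
Definition reglue (X : gdat) (p : {ffun 'I_(gh X) -> 'I_(gh X)})
  (d : {ffun 'I_(gh X) -> bool}) : gdat :=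
  GD (gk X) (gh X) (gatt X) (natf p)
     (fun h => match (insub h : option 'I_(gh X)) with Some j => d j | None => ginit X h end)
     (glab X) (gcol X).

Definition M_n (W : lmodType R) (F : gdat -> W) (X : gdat) : W :=
  \sum_(p : {ffun 'I_(gh X) -> 'I_(gh X)} | is_pairing p)
    match [pick d | coherent p d] with
    | Some d => ((2 * n)%:R ^+ ncirc p * flipsign d) *: F (reglue p d)
    | None => 0
    end.

End Graphs.

(* Expanding psi_n (phi_n X) gives a double sum over the states s of X and the
   pairings pi of its half-edges; exchange the two sums and fix pi.  Since
   omega(p_i, q_j) = delta_ij = - omega(q_j, p_i), the weight of pi in the cut of X
   along s vanishes unless s is also a state for pi.  Adding to the p/q bit of s an
   orientation d that alternates along both the edges of X and the chords of pi
   turns these states into labellings by B_n that are constant on the circles of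
   C(pi): there are (2n)^c(pi) of them, and they all carry the same sign, because
   the initial half-edges of X, as well as those of pi, contain exactly half of
   every set of half-edges invariant under both pairings.  The glued graph is X^pi
   with its half-edges renumbered and its edges directed by leg order; redirecting
   them along d accounts for the remaining sign.  Without such a d no state
   survives. *)

From HB Require Import structures.
From mathcomp Require Import all_boot all_order all_algebra all_fingroup.
From mathcomp Require Import reals.
From mathcomp Require Import zify.
Set Implicit Arguments.
Unset Strict Implicit.
Unset Printing Implicit Defensive.
Import Order.TTheory GRing.Theory Num.Theory.
Local Open Scope ring_scope.

Section Counting.
Variable T : finType.

Lemma card_involution_half (f : T -> T) (A G : pred T) : involutive f ->
  (forall x, A (f x) = ~~ A x) -> (forall x, G (f x) = G x) ->
  (#|[pred x | A x && G x]| * 2 = #|G|)%N.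
Proof.
move=> fK fA fG; rewrite -(cardID A G) muln2 -addnn; congr (_ + _)%N.
  by apply: eq_card => x; rewrite !inE andbC.
rewrite -!sum1_card (reindex_inj (inv_inj fK)); apply: eq_bigl => x.
by rewrite !unfold_in /= fA fG.
Qed.

Lemma card_split (A B : pred T) :
  (#|[pred x | A x && B x]| + #|[pred x | A x && ~~ B x]| = #|A|)%N.
Proof.
rewrite -[RHS](cardID B A); congr (_ + _)%N.
by apply: eq_card => x; rewrite !unfold_in /= andbC.
Qed.

Lemma card_involution_flip (f : T -> T) (A : pred T) : involutive f ->
  (forall x, A (f x) = ~~ A x) -> (#|A| * 2 = #|T|)%N.
Proof.
move=> fK fA; rewrite -[#|T|](card_involution_half fK fA (G := xpredT)) //.
by congr (_ * _)%N; apply: eq_card => x; rewrite [RHS]unfold_in /= andbT.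
Qed.

Lemma prod_sign (R : pzRingType) (P b : pred T) :
  \prod_(x | P x) (-1) ^+ b x = (-1) ^+ #|[pred x | P x && b x]| :> R.
Proof.
rewrite prodrXr -sum1_card; congr (_ ^+ _); rewrite big_mkcond [RHS]big_mkcond.
by apply: eq_bigr => x _; rewrite !unfold_in /=; case: (P x); case: (b x).
Qed.

Lemma card_ffun_connect_const (A : finType) (e : rel T) : connect_sym e ->
  #|[pred g : {ffun T -> A} | [forall x, forall y, e x y ==> (g y == g x)]]|
    = (#|A| ^ n_comp e T)%N.
Proof.
move=> e_sym; pose rts := {x : T | fingraph.root e x == x}.
have card_rts : #|{: rts}| = n_comp e T.
  by rewrite card_sig; apply: eq_card => x; rewrite !inE andbT.
pose rt x : rts := exist _ (fingraph.root e x) (roots_root e_sym x).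
have rtE x y : e x y -> rt y = rt x.
  move=> xy; apply: val_inj; apply/esym/eqP; rewrite /= (root_connect e_sym).
  exact: connect1.
rewrite -card_rts -card_ffun -!sum1_card.
rewrite (reindex_onto (fun u : {ffun rts -> A} => [ffun x => u (rt x)])
                      (fun g => [ffun r => g (val r)])) /=; last first.
  move=> g; rewrite inE => /forallP gconst; apply/ffunP => x; rewrite !ffunE /=.
  have cl : closed e [pred y | g y == g x].
    by move=> y z /(implyP (forallP (gconst y) z)) /eqP gz; rewrite !inE gz.
  by have := closed_connect cl (connect_root e x); rewrite !inE eqxx => /esym/eqP.
apply: eq_bigl => u; rewrite !inE; apply/andP; split.
  by apply/forallP => x; apply/forallP => y; apply/implyP => /rtE; rewrite !ffunE => ->.
apply/eqP/ffunP => r; rewrite !ffunE; congr (u _); apply: val_inj.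
by case: r => r /= /eqP.
Qed.
End Counting.

Lemma omega_bvec (R : realType) n (x y : 'I_n * bool) :
  omega (bvec R x) (bvec R y) =
  if (y.1 == x.1) && (y.2 == ~~ x.2) then (-1) ^+ x.2 else 0.
Proof.
have sum_eq (i j : 'I_n) : \sum_(k < n) ((k == i)%:R * (k == j)%:R : R) = (j == i)%:R.
  rewrite (bigD1 i) //= eqxx mul1r big1 ?addr0 ?(eq_sym j) // => k /negPf ->.
  by rewrite mul0r.
have e_entry (a b : 'I_(n + n)) : (delta_mx 0 a : 'rV[R]_(n + n)) 0 b = (b == a)%:R.
  by rewrite mxE eqxx.
case: x => i a; case: y => j b; rewrite /omega /bvec /=.
case: a; case: b => /=; rewrite ?andbF ?andbT.
- by rewrite big1 // => k _; rewrite !e_entry !eq_lrshift mul0r mulr0 subrr.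
- under eq_bigr => k _
    do rewrite !e_entry eq_lrshift eq_rshift eq_rlshift eq_lshift mul0r sub0r.
  by rewrite sumrN sum_eq; case: (j == i); rewrite ?oppr0.
- under eq_bigr => k _ do rewrite !e_entry eq_lshift eq_rshift eq_rlshift mul0r subr0.
  by rewrite sum_eq; case: (j == i).
- by rewrite big1 // => k _; rewrite !e_entry !eq_rlshift mul0r mulr0 subrr.
Qed.

Lemma signr_complements (R : pzRingType) (a a' b b' : nat) : (a + a' = b + b')%N ->
  (-1) ^+ a * (-1) ^+ b = (-1) ^+ a' * (-1) ^+ b' :> R.
Proof.
move=> E; rewrite -!exprD -signr_odd -[RHS]signr_odd; congr (_ ^+ _).
have : ~~ odd (a + b + (a' + b')) by rewrite addnACA E addnn odd_double.
by rewrite oddD; case: (odd (a + b)); case: (odd (a' + b')).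
Qed.

Definition state_for n N (p : 'I_N -> 'I_N) (s : {ffun 'I_N -> 'I_n * bool}) : bool :=
  [forall h, ((s (p h)).1 == (s h).1) && ((s (p h)).2 == ~~ (s h).2)].

Definition alternating N (m q : 'I_N -> 'I_N) (d : 'I_N -> bool) : bool :=
  [forall h, (d (m h) == ~~ d h) && (d (q h) == ~~ d h)].

(* In the application m and q are the edge pairings of X and of pi, and I and o the
   initial half-edges of X and of the glued graph. *)
Section StateSum.
Variables (R : realType) (n N : nat) (m q : 'I_N -> 'I_N) (I o : pred 'I_N).
Hypotheses (mK : involutive m) (qK : involutive q)
  (Im : forall h, I (m h) = ~~ I h) (oq : forall h, o (q h) = ~~ o h).

Definition state_weight (s : {ffun 'I_N -> 'I_n * bool}) : R :=
  (\prod_(h | I h) (-1) ^+ (s h).2) *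
   \prod_(h | o h) omega (bvec R (s h)) (bvec R (s (q h))).

Lemma state_weightE s : state_weight s =
  if state_for q s then (\prod_(h | I h) (-1) ^+ (s h).2) * \prod_(h | o h) (-1) ^+ (s h).2
  else 0.
Proof.
have [sq|] := boolP (state_for q s).
  congr (_ * _); apply: eq_bigr => h _; rewrite omega_bvec.
  by have /andP [-> ->] := forallP sq h.
case/forallPn => h0 /negbTE not_st.
wlog oh0 : h0 not_st / o h0.
  move=> wl; case oh0: (o h0); first exact: wl oh0.
  apply: (wl (q h0)); last by rewrite oq oh0.
  by rewrite qK; apply: contraFF not_st => /andP [/eqP <- /eqP ->]; rewrite negbK !eqxx.
by rewrite /state_weight [X in _ * X](bigD1 h0) //= omega_bvec not_st mul0r mulr0.
Qed.

Lemma sum_state_weight_eq0 : (forall d : {ffun 'I_N -> bool}, ~~ alternating m q d) ->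
  \sum_(s | state_for m s) state_weight s = 0.
Proof.
move=> no_alt; apply: big1 => s sm; rewrite state_weightE; case: ifP => // sq.
case/negP: (no_alt [ffun h => (s h).2]); apply/forallP => h; rewrite !ffunE.
by have /andP [_ ->] := forallP sm h; have /andP [_ ->] := forallP sq h.
Qed.

Variable d : 'I_N -> bool.
Hypotheses (dm : forall h, d (m h) = ~~ d h) (dq : forall h, d (q h) = ~~ d h).

Definition flip_by (g : {ffun 'I_N -> 'I_n * bool}) : {ffun 'I_N -> 'I_n * bool} :=
  [ffun h => ((g h).1, (g h).2 (+) d h)].

Lemma flip_byK : involutive flip_by.
Proof. by move=> g; apply/ffunP => h; rewrite !ffunE /= addbK; case: (g h). Qed.

Let cycle_rel := fun h h' : 'I_N => (h' == m h) || (h' == q h).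

Definition cycle_const (g : {ffun 'I_N -> 'I_n * bool}) : bool :=
  [forall x, forall y, cycle_rel x y ==> (g y == g x)].

Lemma cycle_constE g :
  cycle_const g = [forall h, (g (m h) == g h) && (g (q h) == g h)].
Proof.
apply/forallP/forallP => [gc h | gc x].
  have gc_h y : cycle_rel h y -> g y == g h by move/(implyP (forallP (gc h) y)).
  by rewrite !gc_h // /cycle_rel eqxx ?orbT.
by apply/forallP => y; apply/implyP => /orP [] /eqP ->; case/andP: (gc x).
Qed.

Lemma state_for_flip_by p g : (forall h, d (p h) = ~~ d h) ->
  state_for p (flip_by g) = [forall h, g (p h) == g h].
Proof.
move=> dp; apply: eq_forallb => h; rewrite !ffunE /= dp.
case: (g (p h)) (g h) => [i a] [j b]; rewrite xpair_eqE /=.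
by case: a; case: b; case: (d h).
Qed.

Lemma states_flip_by g :
  state_for m (flip_by g) && state_for q (flip_by g) = cycle_const g.
Proof.
rewrite cycle_constE !state_for_flip_by //.
apply/andP/forallP => [[/forallP gm /forallP gq] h | gc]; first by rewrite gm gq.
by split; apply/forallP => h; case/andP: (gc h).
Qed.

Lemma card_initial_halves (G : pred 'I_N) :
  (forall h, G (m h) = G h) -> (forall h, G (q h) = G h) ->
  #|[pred h | I h && G h]| = #|[pred h | o h && G h]|.
Proof.
move=> Gm Gq; apply/eqP; rewrite -(eqn_pmul2r (_ : 0 < 2)%N) //.
by rewrite (card_involution_half mK Im Gm) (card_involution_half qK oq Gq).
Qed.

Lemma card_initial : #|I| = #|o|.
Proof.
apply/eqP; rewrite -(eqn_pmul2r (_ : 0 < 2)%N) //.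
by rewrite (card_involution_flip mK Im) (card_involution_flip qK oq).
Qed.

Lemma state_weight_flip_by g : cycle_const g ->
  state_weight (flip_by g) =
    (-1) ^+ #|[pred h | I h && ~~ d h]| * (-1) ^+ #|[pred h | o h && ~~ d h]|.
Proof.
move=> gc; have /andP [_ sq] : state_for m (flip_by g) && state_for q (flip_by g).
  by rewrite states_flip_by.
have [gm gq] : (forall h, (g (m h)).2 = (g h).2) /\ (forall h, (g (q h)).2 = (g h).2).
  rewrite cycle_constE in gc; split => h.
    by case/andP: (forallP gc h) => /eqP ->.
  by case/andP: (forallP gc h) => _ /eqP ->.
rewrite state_weightE sq.
under eq_bigr => h _ do rewrite ffunE /= signr_addb.
under [X in _ * X]eq_bigr => h _ do rewrite ffunE /= signr_addb.
rewrite !big_split /= !prod_sign -(card_initial_halves gm gq) mulrACA -mulrA signrMK.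
by apply: signr_complements; rewrite !card_split card_initial.
Qed.

Lemma sum_state_weight : \sum_(s | state_for m s) state_weight s =
  (2 * n)%:R ^+ n_comp cycle_rel 'I_N *
  ((-1) ^+ #|[pred h | I h && ~~ d h]| * (-1) ^+ #|[pred h | o h && ~~ d h]|).
Proof.
have cycle_rel_sym : connect_sym cycle_rel.
  apply: sym_connect_sym => x y; rewrite /cycle_rel [y == m x]eq_sym [y == q x]eq_sym.
  by rewrite (inv_eq mK) (inv_eq qK).
rewrite (bigID (state_for q)) /= [X in _ + X]big1 ?addr0; last first.
  by move=> s /andP [_ /negbTE not_sq]; rewrite state_weightE not_sq.
rewrite (reindex_inj (inv_inj flip_byK)) /=.
rewrite (eq_bigl cycle_const) => [|g]; last exact: states_flip_by.
rewrite (eq_bigr _ state_weight_flip_by) sumr_const [RHS]mulrC -natrX mulr_natr.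
have := card_ffun_connect_const ('I_n * bool)%type cycle_rel_sym.
by rewrite card_prod card_ord card_bool mulnC => <-.
Qed.
End StateSum.

Lemma pnE m (s : 'S_m) (i : 'I_m) : pn s i = s i.
Proof. by rewrite /pn valK. Qed.

Lemma pn1 m i : pn (1 : 'S_m) i = i.
Proof. by rewrite /pn; case: insubP => // j _ <-; rewrite perm1. Qed.

Lemma pn_lt m (s : 'S_m) i : (i < m)%N -> (pn s i < m)%N.
Proof. by move=> lt_im; rewrite -[i]/(nat_of_ord (Ordinal lt_im)) pnE. Qed.

Lemma pn_inj m (s : 'S_m) i j : (i < m)%N -> (j < m)%N -> pn s i = pn s j -> i = j.
Proof.
move=> lt_im lt_jm; rewrite -[i]/(nat_of_ord (Ordinal lt_im)).
by rewrite -[j]/(nat_of_ord (Ordinal lt_jm)) !pnE => /val_inj/perm_inj [].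
Qed.

Lemma pn_surj m (s : 'S_m) j : (j < m)%N -> exists2 i, (i < m)%N & j = pn s i.
Proof. by move=> lt_jm; exists (s^-1%g (Ordinal lt_jm)) => //; rewrite pnE permKV. Qed.

Lemma natfE N (p : {ffun 'I_N -> 'I_N}) (i : 'I_N) : natf p i = p i.
Proof. by rewrite /natf valK. Qed.

Lemma ltn_perm_pairing N (s : 'S_N) (q : {ffun 'I_N -> 'I_N}) h : is_pairing q ->
  (s (q h) < s (q (q h)))%N = ~~ (s h < s (q h))%N.
Proof.
move=> /forallP/(_ h)/andP [ne /eqP ->].
have : nat_of_ord (s (q h)) != s h by rewrite (inj_eq val_inj) (inj_eq perm_inj).
lia.
Qed.

Section Graphs.
Variables (R : realType) (O : cycSmod R).
Implicit Types (X Y : gdat O).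

Lemma deg_transported X Y s t : wf X -> @transported _ _ X Y s t ->
  forall v, (v < gk X)%N -> deg Y (pn s v) = deg X v.
Proof.
case=> wf_edge _ _ _; case: Y => kY hY attY mateY initY labY colY [/= _ -> attE _] v lt_v.
rewrite /deg -!sum1_card (reindex_inj (@perm_inj _ t)); apply: eq_bigl => h /=.
have [lt_att _ _ _ _] := wf_edge h (ltn_ord h); have [attYE _ _ _] := attE h (ltn_ord h).
rewrite !inE -pnE attYE; apply/eqP/eqP => [|-> //]; exact: pn_inj.
Qed.

Lemma wf_transported X Y s t : wf X -> @transported _ _ X Y s t -> wf Y.
Proof.
move=> wfX tr; have degE := deg_transported wfX tr.
case: wfX => wf_edge wf_lab wf_leg wf_vert; case: tr => ek eh trE colE.
split.
- move=> h'; rewrite eh => lt_h'; have [h lt_h ->] := pn_surj t lt_h'.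
  have [lt_att lt_mate ne_mate mateK init_mate] := wf_edge h lt_h.
  have [-> -> -> _] := trE h lt_h; have [_ -> -> _] := trE _ lt_mate.
  rewrite ek mateK init_mate !pn_lt //; split => //.
  by apply/eqP => /(pn_inj lt_mate lt_h)/eqP; rewrite (negbTE ne_mate).
- move=> h'; rewrite eh => lt_h'; have [h lt_h ->] := pn_surj t lt_h'.
  have [-> _ _ ->] := trE h lt_h; have [lt_att _ _ _ _] := wf_edge h lt_h.
  by rewrite degE //; apply: wf_lab.
- move=> h1'; rewrite eh => h2' lt_h1' lt_h2'.
  have [h1 lt_h1 ->] := pn_surj t lt_h1'; have [h2 lt_h2 ->] := pn_surj t lt_h2'.
  have [-> _ _ ->] := trE h1 lt_h1; have [-> _ _ ->] := trE h2 lt_h2.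
  have [lt1 _ _ _ _] := wf_edge h1 lt_h1; have [lt2 _ _ _ _] := wf_edge h2 lt_h2.
  by move=> /(pn_inj lt1 lt2) att12 lab12; rewrite (wf_leg h1 h2).
- move=> v'; rewrite ek => lt_v'; have [v lt_v ->] := pn_surj s lt_v'.
  by rewrite degE // colE //; apply: wf_vert.
Qed.

Lemma wf_flipedge Y h0 : wf Y -> (h0 < gh Y)%N -> wf (flipedge Y h0).
Proof.
case=> wf_edge wf_lab wf_leg wf_vert lt_h0; split => //= h lt_h.
have mate_eq a b : (a < gh Y)%N -> (b < gh Y)%N -> (gmate Y a == b) = (a == gmate Y b).
  move=> lt_a lt_b; have [_ _ _ Ka _] := wf_edge a lt_a.
  by have [_ _ _ Kb _] := wf_edge b lt_b; apply/eqP/eqP => [<-|->].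
have [_ lt_mate0 _ mateK0 _] := wf_edge h0 lt_h0.
have [lt_att lt_mate ne_mate mateK init_mate] := wf_edge h lt_h; split => //.
by rewrite mate_eq // [gmate Y h == _]mate_eq // mateK0 orbC init_mate; case: ifP.
Qed.

Definition reorient Y (ini : nat -> bool) : gdat O :=
  GD (gk Y) (gh Y) (gatt Y) (gmate Y) ini (glab Y) (gcol Y).

Variables (W : lmodType R) (F : gdat O -> W).
Hypothesis respF : respects F.

Lemma reorient_agree Y ini : wf Y -> wf (reorient Y ini) ->
  #|[pred h : 'I_(gh Y) | ginit Y h && ~~ ini h]| = 0 ->
  forall h, (h < gh Y)%N -> ini h = ginit Y h.
Proof.
case=> wf_edge _ _ _ [/= wfi_edge _ _ _] /card0_eq none h lt_h.
have [_ lt_mate _ _ init_mate] := wf_edge h lt_h.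
have [_ _ _ _ /= ini_mate] := wfi_edge h lt_h.
have := none (Ordinal lt_h); have := none (Ordinal lt_mate).
by rewrite !inE /= init_mate ini_mate; case: (ginit Y h); case: (ini h).
Qed.

Lemma card_reorient_flipedge Y ini (h0 : 'I_(gh Y)) : wf Y -> wf (reorient Y ini) ->
  ginit Y h0 && ~~ ini h0 ->
  #|[pred h : 'I_(gh Y) | ginit (flipedge Y h0) h && ~~ ini h]|.+1 =
  #|[pred h : 'I_(gh Y) | ginit Y h && ~~ ini h]|.
Proof.
case=> wf_edge _ _ _ [/= wfi_edge _ _ _] in_h0.
rewrite [RHS](cardD1 h0) inE in_h0 add1n; congr _.+1; apply: eq_card => h.
move/andP: in_h0 => [init_h0 not_ini_h0]; rewrite !inE /=.
have [_ _ _ _ init_mate] := wf_edge h0 (ltn_ord h0).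
have [_ _ _ _ /= ini_mate] := wfi_edge h0 (ltn_ord h0).
have [-> | ne_h] := eqVneq h h0; first by rewrite eqxx init_h0.
rewrite (inj_eq val_inj) (negbTE ne_h) /=; case: eqP => [-> | _] //.
by rewrite init_mate ini_mate init_h0 (negbTE not_ini_h0).
Qed.

Lemma respects_reorient Y ini : wf Y -> wf (reorient Y ini) ->
  F (reorient Y ini) = (-1) ^+ #|[pred h : 'I_(gh Y) | ginit Y h && ~~ ini h]| *: F Y.
Proof.
move k_def: #|_| => k; elim: k Y k_def => [|k IHk] Y k_def wfY wfYi.
  have agree := reorient_agree wfY wfYi k_def.
  rewrite (resp_iso respF (s := 1) (t := 1) wfY wfYi) ?odd_perm1 //.
  by split => // [h lt_h|v lt_v]; rewrite !pn1 //; split; rewrite //= agree.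
have [h0 in_h0] : exists h0, h0 \in [pred h : 'I_(gh Y) | ginit Y h && ~~ ini h].
  by apply/card_gt0P; rewrite k_def.
have -> : reorient Y ini = reorient (flipedge Y h0) ini by [].
have card_flip : #|[pred h : 'I_(gh Y) | ginit (flipedge Y h0) h && ~~ ini h]| = k.
  by apply/eqP; rewrite -eqSS -k_def card_reorient_flipedge.
rewrite IHk //; last exact: wf_flipedge.
by rewrite (resp_flip respF wfY (ltn_ord h0)) scalerN exprS mulN1r scaleNr.
Qed.

End Graphs.

Fixpoint block_pos (sizes : seq nat) (h : nat) : nat * nat :=
  match sizes with
  | [::] => (0%N, h)
  | k :: sizes' => if (h < k)%N then (0%N, h)
                   else let jl := block_pos sizes' (h - k) in (jl.1.+1, jl.2)
  end.

Lemma block_pos_offset sizes j l : (j < size sizes)%N -> (l < nth 0%N sizes j)%N ->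
  block_pos sizes (sumn (take j sizes) + l) = (j, l).
Proof.
elim: sizes j => [|k sizes IH] [|j] //= lt_j lt_l; first by rewrite lt_l.
by rewrite -addnA ltnNge leq_addr /= addKn IH.
Qed.

Lemma leg_ofE (R : realType) (O : cycSmod R) n (w : seq (sspider O n)) h :
  leg_of w h = block_pos (map (@sm _ _ _) w) h.
Proof. by elim: w h => //= s w IH h; rewrite IH. Qed.

(* [glue] and [weight] with the number of legs as a parameter, so that [nlegs w] can
   be rewritten to the number of half-edges of X. *)
Section GlueNat.
Variables (R : realType) (O : cycSmod R) (n : nat).

Definition glue_nat (w : seq (sspider O n)) (M : nat) (f : nat -> nat) : gdat O :=
  GD (size w) M (fun h => (leg_of w h).1) f
     (fun h => (h < f h)%N) (fun h => (leg_of w h).2)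
     (fun j => existT _ (sm (nth (dflt O n) w j)) (so (nth (dflt O n) w j))).

Definition weight_nat (w : seq (sspider O n)) (M : nat) (f : nat -> nat) : R :=
  \prod_(h < M | (h < f h)%N) omega (legvec w h) (legvec w (f h)).

Lemma psi_n_cast (W : lmodType R) (F : gdat O -> W) w M : nlegs w = M ->
  psi_n F w = \sum_(p : {ffun 'I_M -> 'I_M} | is_pairing p)
                weight_nat w M (natf p) *: F (glue_nat w M (natf p)).
Proof.
move=> e; case: M / e; apply: eq_bigr => p _; congr (_ *: _).
by apply: eq_big => h; rewrite natfE.
Qed.

End GlueNat.

Section CutNumbering.
Variables (R : realType) (O : cycSmod R) (n : nat) (X : gdat O).
Hypothesis wfX : wf X.
Local Notation N := (gh X).

Definition degs : seq nat := [seq deg X v | v <- iota 0 (gk X)].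

Lemma sumn_degs : sumn degs = N.
Proof.
case: wfX => wf_edge _ _ _.
rewrite sumnE big_map; under eq_bigr => v _ do rewrite /deg -sum1_card big_mkcond.
rewrite exchange_big /= -[RHS]card_ord -sum1_card; apply: eq_bigr => h _.
have [lt_att _ _ _ _] := wf_edge h (ltn_ord h).
rewrite -big_mkcond sum1_count (eq_count (a2 := pred1 (gatt X h))) => [|v].
  by rewrite count_uniq_mem ?iota_uniq // mem_iota lt_att.
by rewrite /= eq_sym.
Qed.

Lemma map_sm_cut (s : {ffun 'I_N -> 'I_n * bool}) : map (@sm _ _ _) (cut s) = degs.
Proof.
rewrite /cut -map_comp; apply/eq_in_map => v; rewrite mem_iota /= => lt_v.
by case: wfX => _ _ _ wf_vert; case: (wf_vert v lt_v).
Qed.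

Lemma nlegs_cut (s : {ffun 'I_N -> 'I_n * bool}) : nlegs (cut s) = N.
Proof. by rewrite /nlegs map_sm_cut sumn_degs. Qed.

Definition leg_index (h : nat) : nat := (sumn (take (gatt X h) degs) + glab X h)%N.

Lemma block_pos_leg_index h : (h < N)%N ->
  block_pos degs (leg_index h) = (gatt X h, glab X h).
Proof.
move=> lt_h; case: wfX => wf_edge wf_lab _ _; have [lt_att _ _ _ _] := wf_edge h lt_h.
rewrite block_pos_offset ?size_map ?size_iota //.
by rewrite (nth_map 0%N) ?size_iota // nth_iota //; apply: wf_lab.
Qed.

Lemma leg_index_lt h : (h < N)%N -> (leg_index h < N)%N.
Proof.
move=> lt_h; case: wfX => wf_edge wf_lab _ _; have [lt_att _ _ _ _] := wf_edge h lt_h.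
have lt_deg : (glab X h < nth 0%N degs (gatt X h))%N.
  by rewrite (nth_map 0%N) ?size_iota // nth_iota //; apply: wf_lab.
have := congr1 sumn (cat_take_drop (gatt X h) degs).
rewrite sumn_cat (drop_nth 0%N) ?size_map ?size_iota //= sumn_degs /leg_index.
lia.
Qed.

Lemma leg_index_inj h1 h2 :
  (h1 < N)%N -> (h2 < N)%N -> leg_index h1 = leg_index h2 -> h1 = h2.
Proof.
move=> lt_h1 lt_h2 eq12; have := block_pos_leg_index lt_h1.
rewrite eq12 block_pos_leg_index // => -[att12 lab12].
by case: wfX => _ _ wf_leg _; apply: wf_leg.
Qed.

Definition leg_index_ord (h : 'I_N) : 'I_N := Ordinal (leg_index_lt (ltn_ord h)).

Lemma leg_index_ord_inj : injective leg_index_ord.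
Proof. by move=> h1 h2 /(congr1 val) /leg_index_inj eq12; apply/val_inj/eq12. Qed.

Definition leg_perm : 'S_N := perm leg_index_ord_inj.

Lemma leg_permE h : nat_of_ord (leg_perm h) = leg_index h.
Proof. by rewrite permE. Qed.

Lemma pn_leg_perm h : (h < N)%N -> pn leg_perm h = leg_index h.
Proof. by move=> lt_h; rewrite -[h]/(nat_of_ord (Ordinal lt_h)) pnE leg_permE. Qed.

Lemma leg_of_cut (s : {ffun 'I_N -> 'I_n * bool}) h : (h < N)%N ->
  leg_of (cut s) (leg_index h) = (gatt X h, glab X h).
Proof. by move=> lt_h; rewrite leg_ofE map_sm_cut block_pos_leg_index. Qed.

Lemma legvec_cut (s : {ffun 'I_N -> 'I_n * bool}) (h : 'I_N) :
  legvec (cut s) (leg_index h) = bvec R (s h).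
Proof.
rewrite /legvec leg_of_cut //=; case: wfX => wf_edge _ wf_leg _.
have [lt_att _ _ _ _] := wf_edge h (ltn_ord h).
rewrite /cut (nth_map 0%N) ?size_iota // nth_iota //= add0n.
apply: (big_pred1 h) => h' /=.
apply/andP/eqP => [[/eqP att' /eqP lab']|->]; last by rewrite !eqxx.
by apply/val_inj/(wf_leg _ _ (ltn_ord h') (ltn_ord h)).
Qed.

Definition rewire (q : {ffun 'I_N -> 'I_N}) (ini : nat -> bool) : gdat O :=
  GD (gk X) N (gatt X) (natf q) ini (glab X) (gcol X).

Lemma wf_rewire q (ini : nat -> bool) : is_pairing q ->
  (forall h : 'I_N, ini (q h) = ~~ ini h) -> wf (rewire q ini).
Proof.
move=> /forallP q_pair ini_q; case: wfX => wf_edge wf_lab wf_leg wf_vert.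
split => //= h lt_h; have [lt_att _ _ _ _] := wf_edge h lt_h.
rewrite -[h]/(nat_of_ord (Ordinal lt_h)) !natfE.
by have /andP [ne /eqP qK] := q_pair (Ordinal lt_h); split; rewrite ?qK ?ini_q.
Qed.

Definition glued q := rewire q (fun h => (pn leg_perm h < pn leg_perm (natf q h))%N).

Lemma wf_glued q : is_pairing q -> wf (glued q).
Proof.
by move=> q_pair; apply: wf_rewire => // h; rewrite !natfE !pnE ltn_perm_pairing.
Qed.

Definition conj_pairing (q : {ffun 'I_N -> 'I_N}) : {ffun 'I_N -> 'I_N} :=
  [ffun k => leg_perm (q ((leg_perm^-1)%g k))].

Lemma conj_pairingE q h : conj_pairing q (leg_perm h) = leg_perm (q h).
Proof. by rewrite ffunE permK. Qed.

Lemma conj_pairing_inj : injective conj_pairing.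
Proof.
move=> q1 q2 eq12; apply/ffunP => h; apply: (@perm_inj _ leg_perm).
by rewrite -!conj_pairingE eq12.
Qed.

Lemma is_pairing_conj q : is_pairing (conj_pairing q) = is_pairing q.
Proof.
apply/forallP/forallP => q_pair h.
  by move: (q_pair (leg_perm h)); rewrite !conj_pairingE !(inj_eq perm_inj).
by rewrite -(permKV leg_perm h) !conj_pairingE !(inj_eq perm_inj).
Qed.

Lemma glue_cut_transported (s : {ffun 'I_N -> 'I_n * bool}) q :
  @transported _ _ (glued q) (glue_nat (cut s) N (natf (conj_pairing q))) 1 leg_perm.
Proof.
split => //=.
- by rewrite size_map size_iota.
- move=> h lt_h; rewrite pn_leg_perm // leg_of_cut //= pn1.
  by rewrite -[h]/(nat_of_ord (Ordinal lt_h)) -leg_permE !natfE conj_pairingE pnE.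
- move=> v lt_v; rewrite pn1 /cut (nth_map 0%N) ?size_iota // nth_iota //= add0n.
  by case: (gcol X v).
Qed.

Variables (W : lmodType R) (F : gdat O -> W).
Hypothesis respF : respects F.

Lemma F_glue_cut (s : {ffun 'I_N -> 'I_n * bool}) q : is_pairing q ->
  F (glue_nat (cut s) N (natf (conj_pairing q))) = F (glued q).
Proof.
move=> q_pair; have tr := glue_cut_transported s q; have wfq := wf_glued q_pair.
by rewrite (resp_iso respF wfq (wf_transported wfq tr) tr) odd_perm1 scale1r.
Qed.

Lemma weight_cut (s : {ffun 'I_N -> 'I_n * bool}) q :
  weight_nat (cut s) N (natf (conj_pairing q)) =
  \prod_(h | (leg_perm h < leg_perm (q h))%N) omega (bvec R (s h)) (bvec R (s (q h))).
Proof.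
rewrite /weight_nat (reindex_inj (@perm_inj _ leg_perm)) /=.
apply: eq_big => h; first by rewrite natfE conj_pairingE.
by move=> _; rewrite natfE conj_pairingE !leg_permE !legvec_cut.
Qed.

Lemma psi_n_cut (s : {ffun 'I_N -> 'I_n * bool}) :
  psi_n F (cut s) = \sum_(q : {ffun 'I_N -> 'I_N} | is_pairing q)
    (\prod_(h | (leg_perm h < leg_perm (q h))%N) omega (bvec R (s h)) (bvec R (s (q h))))
      *: F (glued q).
Proof.
rewrite (psi_n_cast F (nlegs_cut s)) (reindex_inj conj_pairing_inj) /=.
apply: eq_big => q; first exact: is_pairing_conj.
by rewrite is_pairing_conj => q_pair; rewrite weight_cut F_glue_cut.
Qed.

End CutNumbering.

Section PsiPhi.
Variables (R : realType) (O : cycSmod R) (n : nat) (X : gdat O).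
Hypothesis wfX : wf X.
Local Notation N := (gh X).

Lemma mateo_val (h : 'I_N) : nat_of_ord (mateo h) = gmate X h.
Proof.
rewrite /mateo val_insubd; case: wfX => wf_edge _ _ _.
by have [_ -> _ _ _] := wf_edge h (ltn_ord h).
Qed.

Lemma mateoK : involutive (@mateo _ _ X).
Proof.
move=> h; apply: val_inj; rewrite /= !mateo_val.
by case: wfX => wf_edge _ _ _; have [_ _ _ -> _] := wf_edge h (ltn_ord h).
Qed.

Lemma ginit_mateo (h : 'I_N) : ginit X (mateo h) = ~~ ginit X h.
Proof.
rewrite mateo_val; case: wfX => wf_edge _ _ _.
by have [_ _ _ _ ->] := wf_edge h (ltn_ord h).
Qed.

Lemma stsignE (s : {ffun 'I_N -> 'I_n * bool}) :
  stsign s = \prod_(h : 'I_N | ginit X h) (-1) ^+ (s h).2 :> R.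
Proof. by apply: eq_bigr => h _; case: (s h).2; rewrite ?expr1 ?expr0. Qed.

Variables (W : lmodType R) (F : gdat O -> W).
Hypothesis respF : respects F.

Lemma F_reglue q d : is_pairing q -> coherent q d ->
  F (reglue q d) =
    (-1) ^+ #|[pred h | (leg_perm wfX h < leg_perm wfX (q h))%N && ~~ d h]|
      *: F (glued wfX q).
Proof.
move=> q_pair /forallP d_coh.
pose ini h := if (insub h : option 'I_N) is Some j then d j else ginit X h.
have iniE (h : 'I_N) : ini h = d h by rewrite /ini valK.
have -> : reglue q d = reorient (glued wfX q) ini by [].
rewrite (respects_reorient respF (wf_glued wfX q_pair)); last first.
  by apply: (wf_rewire wfX) => // h; rewrite !iniE; case/andP: (d_coh h) => _ /eqP.
by congr (_ ^+ _ *: _); apply: eq_card => h; rewrite !inE /= iniE natfE !pnE.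
Qed.

Lemma sum_states_pairing q : is_pairing q ->
  (\sum_(s : {ffun 'I_N -> 'I_n * bool} | is_state s) stsign s *
     \prod_(h | (leg_perm wfX h < leg_perm wfX (q h))%N)
        omega (bvec R (s h)) (bvec R (s (q h))))
    *: F (glued wfX q) =
  match [pick d | coherent q d] with
  | Some d => ((2 * n)%:R ^+ ncirc q * flipsign d) *: F (reglue q d)
  | None => 0
  end.
Proof.
move=> q_pair; pose o h := (leg_perm wfX h < leg_perm wfX (q h))%N.
have qK : involutive q by move=> h; case/andP: (forallP q_pair h) => _ /eqP.
have oq h : o (q h) = ~~ o h by rewrite /o ltn_perm_pairing.
under eq_bigr => s _ do rewrite stsignE.
case: pickP => [d d_coh | no_coh]; last first.
  by rewrite (sum_state_weight_eq0 _ _ _ qK oq) ?scale0r // => d; apply/negbT/no_coh.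
have /forallP d_alt := d_coh.
have dm h : d (mateo h) = ~~ d h by case/andP: (d_alt h) => /eqP.
have dq h : d (q h) = ~~ d h by case/andP: (d_alt h) => _ /eqP.
rewrite (sum_state_weight _ _ mateoK qK ginit_mateo oq dm dq) (F_reglue q_pair d_coh).
by rewrite scalerA /flipsign mulrA.
Qed.

End PsiPhi.

Theorem proposition2p23 (R : realType) (O : cycSmod R) (n : nat) :
  (1 <= n)%N ->
  forall X : gdat O, wf X ->
  forall (W : lmodType R) (F : gdat O -> W), respects F ->
  psi_phi n F X = M_n n F X.
Proof.
(* The identity also holds for n = 0. *)
move=> _ X wfX W F respF; rewrite /psi_phi /M_n.
under eq_bigr => s _ do rewrite (psi_n_cut wfX respF) scaler_sumr.
rewrite exchange_big /=; apply: eq_bigr => q q_pair.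
under eq_bigr => s _ do rewrite scalerA.
by rewrite -scaler_suml sum_states_pairing.
Qed.
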